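(* Let $j$ be a positive integer and for $w>1$ and a d.f. $F$ on $\mathbb{R}$ define the d.f. $$H_w(x)=\frac{F(x)}{\{w-(w-1)F(x)^j\}^{1/j}},\quad x\in\mathbb{R}.$$ Let $u,v>1$, let $N\sim$ Harris$(u,j)$ and $M\sim$ Harris$(v,j)$, let $X_1,X_2,\dots$ be i.i.d. with d.f. $F$, with $N,M,(X_i)$ mutually independent, and let $V=\max(X_1,\dots,X_N)$, so $P\{V\le x\}=H_u(x)$. If $V_1,V_2,\dots$ are i.i.d. copies of $V$, independent of $M$, then $P\{\max(V_1,\dots,V_M)\le x\}=H_{uv}(x)$ for all $x$. Hence the family $\{H_w:w>1\}$ is closed under taking maxima of Harris$(v,j)$-many i.i.d. copies (it is $M$-max stable).
   Context: For an integer $k>0$ and $a>1$, the Harris$(a,k)$ law is the distribution on the positive integers with PGF $\dfrac{s}{\{a-(a-1)s^k\}^{1/k}}$. *)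

From HB Require Import structures.
From mathcomp Require Import all_boot all_order all_algebra.
From mathcomp Require Import all_classical all_reals all_analysis.
Set Implicit Arguments. Unset Strict Implicit. Unset Printing Implicit Defensive.
Import Order.TTheory GRing.Theory Num.Theory.
Import numFieldNormedType.Exports.
Local Open Scope classical_set_scope.
Local Open Scope ring_scope.

Definition is_df (R : realType) (F : R -> R) : Prop :=
  {homo F : x y / x <= y} /\
  (forall x : R, F y @[y --> x^'+] --> F x) /\
  (F y @[y --> -oo] --> (0 : R)) /\
  (F y @[y --> +oo] --> (1 : R)).

Definition harris_pmf (R : realType) (a : R) (k : nat) (p : nat -> R) : Prop :=
  (forall n, 0 <= p n) /\
  forall s : R, 0 <= s <= 1 ->
    (\sum_(0 <= i < n) p i * s ^+ i) @[n --> \oo] -->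
      s / ((a - (a - 1) * s ^+ k) `^ (k%:R^-1)).

Definition Hw (R : realType) (j : nat) (F : R -> R) (w : R) (x : R) : R :=
  F x / ((w - (w - 1) * F x ^+ j) `^ (j%:R^-1)).

Definition mutual_indep d (T : measurableType d) (R : realType)
    (P : probability T R) (I : eqType) (E : I -> set (set T)) : Prop :=
  forall (J : seq I) (A : I -> set T), uniq J ->
    (forall i, i \in J -> E i (A i)) ->
    P (\big[setI/setT]_(i <- J) A i) = (\prod_(i <- J) P (A i))%E.

Definition rv_events d (T : measurableType d) (R : realType) (X : T -> R)
  : set (set T) := [set X @^-1` B | B in [set B : set R | measurable B]].

Definition nat_events (T : Type) (N : T -> nat) : set (set T) :=
  [set N @^-1` A | A in [set: set nat]].

(* max(Y_0, ..., Y_{n-1}) (equal to Y_0 when n = 0) *)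
Definition maxn_rv (R : realType) (T : Type) (Y : nat -> T -> R) (n : T -> nat)
  (t : T) : R := \big[Num.max/Y 0%N t]_(i < n t) Y i t.

From HB Require Import structures.
From mathcomp Require Import all_boot all_order all_algebra.
From mathcomp Require Import all_classical all_reals all_analysis.
From mathcomp Require Import ring lra.
Import Order.TTheory GRing.Theory Num.Theory.
Import numFieldNormedType.Exports.
Local Open Scope classical_set_scope.
Local Open Scope ring_scope.

(* Conditioning on the value n of the counting variable K, the event
   {max(Y_0, ..., Y_(K-1)) <= x} is the intersection of n independent events
   of probability c = P(Y_i <= x), so its probability is sum_n P(K = n) c^n,
   the probability generating function of K evaluated at c.  For a Harris law
   this is the formula defining H_w, which gives the distribution of V; and
   substituting H_u for F in H_v yields H_(uv) by a direct computation. *)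

Lemma harris_pmf0 (R : realType) (a : R) (k : nat) (p : nat -> R) :
  harris_pmf a k p -> p 0%N = 0.
Proof.
move=> [_ /(_ 0) pgf0]; have /pgf0 : 0 <= (0 : R) <= 1 by rewrite lexx ler01.
rewrite mul0r => /cvg_lim <- //; apply/esym/norm_lim_near_cst; exists 1%N => // n n_gt0.
rewrite big_ltn // expr0 mulr1 big_nat big1 ?addr0 // => i /andP[i_gt0 _].
by rewrite expr0n gtn_eqF // mulr0.
Qed.

Lemma Hw_mul (R : realType) (j : nat) (F : R -> R) (u v x : R) :
  (0 < j)%N -> 1 < u -> 1 < v -> 0 <= F x <= 1 ->
  Hw j (Hw j F u) v x = Hw j F (u * v) x.
Proof.
move=> j_gt0 u_gt1 v_gt1 /andP[F_ge0 F_le1].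
rewrite /Hw; set f := F x; set e := j%:R^-1.
have fj_ge0 : 0 <= f ^+ j by rewrite exprn_ge0.
have fj_le1 : f ^+ j <= 1 by rewrite exprn_ile1.
set a := u - (u - 1) * f ^+ j; set b := u * v - (u * v - 1) * f ^+ j.
have a_ge1 : 1 <= a by rewrite /a; nra.
have a_gt0 : 0 < a by apply: lt_le_trans a_ge1.
have b_gt0 : 0 < b.
  have -> : b = v * a - (v - 1) * f ^+ j by rewrite /b /a; ring.
  nra.
have ae_gt0 : 0 < a `^ e by rewrite powR_gt0.
have be_gt0 : 0 < b `^ e by rewrite powR_gt0.
have aeX : (a `^ e) ^+ j = a.
  rewrite -powR_mulrn ?powR_ge0 // -powRrM mulVf ?pnatr_eq0 -?lt0n //.
  by rewrite powRr1 // ltW.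
have -> : v - (v - 1) * (f / a `^ e) ^+ j = b / a.
  by rewrite expr_div_n aeX /b /a; field; rewrite -/a gt_eqF.
have inv_ae : (a^-1) `^ e = (a `^ e)^-1.
  by rewrite -powR_inv1 ?(ltW a_gt0) // -powRrM mulN1r powRN.
rewrite powRM ?(ltW b_gt0) ?invr_ge0 ?(ltW a_gt0) // inv_ae.
by field; rewrite !gt_eqF.
Qed.

Section probability.
Context {d : measure_display} {T : measurableType d} {R : realType}.

Lemma measure_bigcup_cvg (mu : {measure set T -> \bar R}) (G : nat -> set T)
    (a : nat -> R) (L : R) :
  (forall n, measurable (G n)) -> trivIset setT G ->
  (forall n, mu (G n) = (a n)%:E) ->
  (\sum_(0 <= i < n) a i) @[n --> \oo] --> L ->
  mu (\bigcup_n G n) = L%:E.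
Proof.
move=> mG tG muG aL.
have sum_cvg : (\sum_(0 <= i < n) mu (G i)) @[n --> \oo] --> L%:E.
  rewrite (@eq_cvg _ _ _ _ (fun n => (\sum_(0 <= i < n) a i)%:E)).
    by apply: cvg_EFin => //; near=> n.
  by move=> n; rewrite -sumEFin; apply: eq_bigr => i _; exact: muG.
have := @measure_semi_sigma_additive _ _ _ mu G mG tG (bigcupT_measurable G mG).
by move=> /cvg_lim <- //; rewrite (cvg_lim _ sum_cvg).
Unshelve. all: by end_near.
Qed.

Lemma measurable_le_preimage {Y : T -> R} (x : R) :
  measurable_fun setT Y -> measurable [set t | Y t <= x].
Proof.
move=> mY; have -> : [set t | Y t <= x] = Y @^-1` [set` `]-oo, x]].
  by apply/seteqP; split => t /=; rewrite in_itv.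
by rewrite -(setTI (Y @^-1` _)); exact: mY (measurable_itv _).
Qed.

Lemma rv_events_le (Y : T -> R) (x : R) : rv_events Y [set t | Y t <= x].
Proof.
exists [set` `]-oo, x]]; first exact: measurable_itv.
by apply/seteqP; split => t /=; rewrite in_itv.
Qed.

Lemma nat_events_fiber (K : T -> nat) (n : nat) : nat_events K (K @^-1` [set n]).
Proof. by exists [set n]. Qed.

Variable P : probability T R.

Lemma probability_EFin01 (A : set T) (c : R) :
  measurable A -> P A = c%:E -> 0 <= c <= 1.
Proof. by move=> mA PA; rewrite -!lee_fin -PA measure_ge0 probability_le1. Qed.

Lemma mutual_indep_fiber (I : eqType) (E : I -> set (set T)) (G : I -> set T)
    (i0 : I) (f : nat -> I) (s : seq nat) :
  mutual_indep P E -> injective f -> (forall i, f i != i0) -> uniq s ->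
  E i0 (G i0) -> (forall i, E (f i) (G (f i))) ->
  P (G i0 `&` \big[setI/setT]_(i <- s) G (f i))
    = (P (G i0) * \prod_(i <- s) P (G (f i)))%E.
Proof.
move=> indep f_inj f_neq0 s_uniq EG0 EGf.
have := indep (i0 :: map f s) G; rewrite !big_cons !big_map; apply.
  rewrite /= map_inj_uniq // s_uniq andbT.
  by apply/mapP => -[i _ /esym/eqP]; rewrite (negbTE (f_neq0 i)).
by move=> k; rewrite in_cons => /predU1P[-> // | /mapP[i _ ->]].
Qed.

Section compound_maximum.
Variables (Y : nat -> T -> R) (K : T -> nat) (x : R).

Lemma maxn_rv_fiber_le n :
  K @^-1` [set n.+1] `&` [set t | maxn_rv Y K t <= x]
  = K @^-1` [set n.+1] `&` \big[setI/setT]_(0 <= i < n.+1) [set t | Y i t <= x].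
Proof.
rewrite -bigcap_seq; apply/seteqP; split=> t [Kt];
  have {}Kt : K t = n.+1 := Kt; rewrite /= /maxn_rv Kt.
  move=> /bigmax_leP[_ Yle]; split=> // i; rewrite /= mem_index_iota => i_lt.
  exact: (Yle (Ordinal i_lt)).
move=> Yle; split=> //; apply/bigmax_leP; split=> [|i _]; apply: Yle.
  by rewrite /= mem_index_iota.
by rewrite /= mem_index_iota ltn_ord.
Qed.

Lemma maxn_rv_fiber0_le :
  K @^-1` [set 0%N] `&` [set t | maxn_rv Y K t <= x]
  = K @^-1` [set 0%N] `&` [set t | Y 0%N t <= x].
Proof.
apply/seteqP; split=> t [Kt]; have {}Kt : K t = 0%N := Kt;
  by rewrite /= /maxn_rv Kt big_ord0.
Qed.

Variables (I : eqType) (E : I -> set (set T)) (i0 : I) (f : nat -> I) (g : I -> nat).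
Hypotheses (indep : mutual_indep P E) (fK : cancel f g)
  (f_neq0 : forall i, f i != i0) (EK : E i0 = nat_events K)
  (EY : forall i, E (f i) = rv_events (Y i))
  (mY : forall i, measurable_fun setT (Y i))
  (mK : forall n, measurable (K @^-1` [set n])).

Lemma measurable_maxn_rv_fiber n :
  measurable (K @^-1` [set n] `&` [set t | maxn_rv Y K t <= x]).
Proof.
have mYle i := measurable_le_preimage x (mY i).
case: n => [|n]; first by rewrite maxn_rv_fiber0_le; exact: measurableI.
rewrite maxn_rv_fiber_le; apply: measurableI => //.
by apply: big_ind => //; exact: measurableI.
Qed.

Lemma maxn_rv_fiber_prob (p : nat -> R) (c : R) n :
  (forall n, P (K @^-1` [set n]) = (p n)%:E) -> p 0%N = 0 ->
  (forall i, P [set t | Y i t <= x] = c%:E) ->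
  P (K @^-1` [set n] `&` [set t | maxn_rv Y K t <= x]) = (p n * c ^+ n)%:E.
Proof.
move=> PK p0 PY; case: n => [|n].
  (* On the null event {K = 0}, maxn_rv takes the junk value Y_0. *)
  rewrite p0 mul0r; apply/eqP; rewrite eq_le measure_ge0 andbT -p0 -PK.
  apply: le_measure; last by move=> t [].
    exact/mem_set/measurable_maxn_rv_fiber.
  exact/mem_set/mK.
pose A k := if k == i0 then K @^-1` [set n.+1] else [set t | Y (g k) t <= x].
have Af i : A (f i) = [set t | Y i t <= x] by rewrite /A (negbTE (f_neq0 i)) fK.
have A0 : A i0 = K @^-1` [set n.+1] by rewrite /A eqxx.
rewrite maxn_rv_fiber_le -A0 -(eq_bigr _ (fun i _ => Af i)).
rewrite (@mutual_indep_fiber _ E A i0 f _ indep (can_inj fK)) ?iota_uniq //; last first.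
- by move=> i; rewrite Af EY; exact: rv_events_le.
- by rewrite A0 EK; exact: nat_events_fiber.
rewrite A0 PK (eq_bigr _ (fun i _ => congr1 P (Af i))) (eq_bigr _ (fun i _ => PY i)).
by rewrite prodEFin prodr_const_nat subn0 -EFinM.
Qed.

Lemma maxn_rv_cdf (p : nat -> R) (c L : R) :
  (forall n, P (K @^-1` [set n]) = (p n)%:E) -> p 0%N = 0 ->
  (forall i, P [set t | Y i t <= x] = c%:E) ->
  (\sum_(0 <= i < n) p i * c ^+ i) @[n --> \oo] --> L ->
  P [set t | maxn_rv Y K t <= x] = L%:E.
Proof.
move=> PK p0 PY pgf.
pose G n := K @^-1` [set n] `&` [set t | maxn_rv Y K t <= x].
have tG : trivIset setT G by move=> n m _ _ [t [[/= <- _] [/= <- _]]].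
have -> : [set t | maxn_rv Y K t <= x] = \bigcup_n G n.
  by apply/seteqP; split => [t xt|t [n _ []//]]; exists (K t).
apply: (@measure_bigcup_cvg P G _ _ measurable_maxn_rv_fiber tG _ pgf) => n.
exact: maxn_rv_fiber_prob.
Qed.

End compound_maximum.
End probability.

Theorem proposition2p2 (R : realType) (j : nat) (F : R -> R) (u v : R)
  (d : measure_display) (T : measurableType d) (P : probability T R)
  (pN pM : nat -> R) (N M : T -> nat) (X : nat -> T -> R) (V' : nat -> T -> R) :
  (0 < j)%N -> is_df F -> 1 < u -> 1 < v ->
  harris_pmf u j pN -> harris_pmf v j pM ->
  (forall n, measurable (N @^-1` [set n])) ->
  (forall n, measurable (M @^-1` [set n])) ->
  (forall n, P (N @^-1` [set n]) = (pN n)%:E) ->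
  (forall n, P (M @^-1` [set n]) = (pM n)%:E) ->
  (forall i, measurable_fun setT (X i)) ->
  (forall i x, P [set t | X i t <= x] = (F x)%:E) ->
  mutual_indep P (fun k : nat + bool => match k with
                    | inl i => rv_events (X i)
                    | inr true => nat_events N
                    | inr false => nat_events M end) ->
  (forall i, measurable_fun setT (V' i)) ->
  (forall i x, P [set t | V' i t <= x] = P [set t | maxn_rv X N t <= x]) ->
  mutual_indep P (fun k : option nat => match k with
                    | Some i => rv_events (V' i)
                    | None => nat_events M end) ->
  (forall x, P [set t | maxn_rv X N t <= x] = (Hw j F u x)%:E) /\
  (forall x, P [set t | maxn_rv V' M t <= x] = (Hw j F (u * v) x)%:E).
Proof.
move=> j_gt0 _ u_gt1 v_gt1 hN hM mN mM PN PM mX PX indepX mV PV indepV.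
have cdf01 (Y : T -> R) x c : measurable_fun setT Y -> P [set t | Y t <= x] = c%:E ->
    0 <= c <= 1.
  by move=> mY; apply: probability_EFin01; exact: measurable_le_preimage.
have cdfV x : P [set t | maxn_rv X N t <= x] = (Hw j F u x)%:E.
  apply: (@maxn_rv_cdf _ _ _ P X N x _ _ (inr true) inl
    (fun k => if k is inl i then i else 0%N) indepX) => //.
  - exact: harris_pmf0 hN.
  - by apply: hN.2; exact: cdf01 (mX 0%N) (PX 0%N x).
split=> // x.
have V01 : 0 <= Hw j F u x <= 1 by apply: cdf01 (mV 0%N) _; rewrite PV cdfV.
rewrite -Hw_mul //; last exact: cdf01 (mX 0%N) (PX 0%N x).
apply: (@maxn_rv_cdf _ _ _ P V' M x _ _ None Some (odflt 0%N) indepV) => //.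
- exact: harris_pmf0 hM.
- by move=> i; rewrite PV cdfV.
- exact: hM.2.
Qed.
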